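(* For each integer $N\ge 1$ let $\Gamma_N$ be the $(N+1,2)$-PPCFG with nonterminals $\{\mathtt{START},X_1,\dots,X_N\}$, terminals $\{0,1\}$, start symbol $\mathtt{START}$, and the following $N+1$ production groups: the group $(\mathtt{START}\to X_1X_2\cdots X_N,\ \mathtt{START}\to X_1X_2\cdots X_N)$, and for each $k\in\{1,\dots,N\}$ the group $(X_k\to 0,\ X_k\to 1)$. Consider any (deterministic) learning algorithm that, for every parameter setting $p^*\in\{1,2\}^{N+1}$ taken as the unknown target, interacts with a membership oracle for $L(\Gamma_{N,p^*})$ and an equivalence oracle for $L(\Gamma_{N,p^*})$ (whose hypotheses are of the form $\Gamma_{N,p}$, and which answers ``true'' if $L(\Gamma_{N,p})=L(\Gamma_{N,p^*})$ and otherwise returns a string in the symmetric difference $L(\Gamma_{N,p})\,\Delta\,L(\Gamma_{N,p^*})$), and which eventually outputs a parameter setting $p$ with $L(\Gamma_{N,p})=L(\Gamma_{N,p^*})$. Then there is a target $p^*$ and a choice of oracle answers consistent with it for which the algorithm makes at least $2^N-1$ queries. Consequently, there is no algorithm that learns the PPCFGs from equivalence and membership queries using a number of queries bounded by a polynomial in $n$ and $k$.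
   Context: An $(n,k)$-principled parametric context-free grammar ($(n,k)$-PPCFG) is a 4-tuple $\Gamma=(V,\Sigma,\Pi,S)$ where $V$ is a finite set of nonterminals, $\Sigma$ a finite set of terminals, $S\in V$ the start symbol, and $\Pi$ a list of $n$ production groups, the $i$-th group being a $k$-tuple of context-free productions $\Pi_{i,1},\dots,\Pi_{i,k}$, each of the form $A\to\alpha$ with $A\in V$, $\alpha\in(V\cup\Sigma)^*$. A parameter setting is $p=(p_1,\dots,p_n)$ with each $p_i\in\{1,\dots,k\}$; $\Gamma_p$ denotes the ordinary context-free grammar $(V,\Sigma,R,S)$ with $R=\{\Pi_{i,p_i}: 1\le i\le n\}$, and $L(\Gamma_p)$ its language. A membership oracle for $L$ takes a string $w$ and answers whether $w\in L$. The class of PPCFGs is learnable from equivalence and membership queries if there is an algorithm which, for every PPCFG $\Gamma$ and every target language of the form $L(\Gamma_{p^*})$, after finitely many queries outputs some $p$ with $L(\Gamma_p)=L(\Gamma_{p^*})$; it does so efficiently if the number of queries is bounded by a polynomial in $n$ and $k$. *)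

From mathcomp Require Import all_boot.
Set Implicit Arguments. Unset Strict Implicit. Unset Printing Implicit Defensive.

(* Groups and alternatives are
   0-indexed ('I_n, 'I_k) instead of 1..n, 1..k. *)
Record ppcfg := PPCFG {
  nonterm : Type;
  term : Type;
  start : nonterm;
  ngroups : nat;
  arity : nat;
  prods : 'I_ngroups -> 'I_arity -> nonterm * seq (nonterm + term)
}.

Definition param (G : ppcfg) := 'I_(ngroups G) -> 'I_(arity G).

Inductive step (G : ppcfg) (p : param G) :
  seq (nonterm G + term G) -> seq (nonterm G + term G) -> Prop :=
| step_rule (i : 'I_(ngroups G)) (u v : seq (nonterm G + term G)) :
    step p (u ++ inl (prods i (p i)).1 :: v) (u ++ (prods i (p i)).2 ++ v).

Inductive derives (G : ppcfg) (p : param G) :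
  seq (nonterm G + term G) -> seq (nonterm G + term G) -> Prop :=
| derives_refl s : derives p s s
| derives_step s t r : step p s t -> derives p t r -> derives p s r.

Definition lang (G : ppcfg) (p : param G) (w : seq (term G)) : Prop :=
  derives p [:: inl (start G)] (map inr w).

Definition same_lang (G : ppcfg) (p q : param G) : Prop :=
  forall w, lang p w <-> lang q w.

(* A deterministic learning algorithm, as a (well-founded) decision tree:
   output a parameter setting, ask a membership query w (answer: bool), or
   ask an equivalence query with hypothesis Gamma_h (answer: None = "true",
   Some w = a counterexample w). *)
Inductive learner (Sig P : Type) :=
| LOut (p : P)
| LMem (w : seq Sig) (k : bool -> learner Sig P)
| LEq (h : P) (k : option (seq Sig) -> learner Sig P).

Definition glearner (G : ppcfg) := learner (term G) (param G).

(* run G ps A n p : along some sequence of oracle answers consistent with the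
   target L(Gamma_ps), learner A makes n queries and then outputs p. *)
Inductive run (G : ppcfg) (ps : param G) : glearner G -> nat -> param G -> Prop :=
| run_out p : run ps (LOut _ p) 0 p
| run_mem w (b : bool) k n p :
    (b <-> lang ps w) -> run ps (k b) n p -> run ps (LMem w k) n.+1 p
| run_eq_yes h k n p :
    same_lang h ps -> run ps (k None) n p -> run ps (LEq h k) n.+1 p
| run_eq_no h w k n p :
    (lang h w <-> ~ lang ps w) -> run ps (k (Some w)) n p -> run ps (LEq h k) n.+1 p.

Definition learns (G : ppcfg) (A : glearner G) : Prop :=
  forall ps n p, run ps A n p -> same_lang p ps.

(* nonterminals: None = START, Some x = X_(x+1); terminals: false = 0, true = 1.
   group 0: (START -> X_1...X_N, START -> X_1...X_N);
   group i+1: (X_(i+1) -> 0, X_(i+1) -> 1). *)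
Definition GammaN_prods (N : nat) (i : 'I_N.+1) (j : 'I_2) :
    option 'I_N * seq (option 'I_N + bool) :=
  match unlift ord0 i with
  | None => (None, [seq inl (Some x) | x <- enum 'I_N])
  | Some x => (Some x, [:: inr (j != ord0)])
  end.

Definition GammaN (N : nat) : ppcfg :=
  @PPCFG (option 'I_N) bool None N.+1 2 (@GammaN_prods N).

(* In Gamma_N every parameter setting ps generates exactly one word, the bit
   string word ps of length N whose k-th bit is the alternative chosen for X_k;
   conversely every bit string of length N arises this way.  Hence a membership
   query or an equivalence query can be answered (no / a counterexample) so that
   at most one candidate bit string is ruled out.  An adversary that keeps a set
   S of candidates consistent with all answers so far therefore forces a correct
   learner to make at least #|S| - 1 queries (lemma [hard_learner]); starting
   with all 2^N strings gives the bound 2^N - 1.  Since Gamma_N has N + 1 groups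
   of 2 productions, and 2^N outgrows every polynomial in N + 3
   ([exp_beats_poly]), no learner makes a polynomially bounded number of
   queries. *)

From mathcomp Require Import all_boot.
From mathcomp Require Import zify.
From Stdlib Require Import Classical.
Set Implicit Arguments. Unset Strict Implicit. Unset Printing Implicit Defensive.

(* Every learner terminates against every target along some consistent answer
   sequence: each oracle question has a truthful answer (classically). *)
Lemma run_exists (G : ppcfg) (ps : param G) (A : glearner G) :
  exists n p, run ps A n p.
Proof.
elim: A => [p|w k IH|h k IH].
- by exists 0, p; constructor.
- have [Hw|Hw] := classic (lang ps w).
    have [n [p Hr]] := IH true.
    by exists n.+1, p; apply: run_mem Hr.
  have [n [p Hr]] := IH false.
  by exists n.+1, p; apply: run_mem Hr.
- case: (classic (same_lang h ps)) => [Hsame|Hdiff].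
    have [n [p Hr]] := IH None.
    by exists n.+1, p; exact: run_eq_yes Hr.
  have [w Hw] : exists w, ~ (lang h w <-> lang ps w).
    by apply: not_all_ex_not.
  have [n [p Hr]] := IH (Some w).
  exists n.+1, p; apply: run_eq_no Hr.
  by split=> [Hh Hp|Hnot]; [apply: Hw | apply: NNPP => Hh; apply: Hw].
Qed.

Lemma derives_catl (G : ppcfg) (ps : param G) u s t :
  derives ps s t -> derives ps (u ++ s) (u ++ t).
Proof.
elim=> [s1|s1 t1 r1 [i u' v] _ IH]; first exact: derives_refl.
apply: derives_step IH.
by have := step_rule ps i (u ++ u') v; rewrite -!catA.
Qed.

Section GammaNLanguage.
Variable N : nat.
Implicit Types (ps : param (GammaN N)) (x : 'I_N).

Definition bit ps x : bool := ps (lift ord0 x) != ord0.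
Definition word ps : seq bool := [seq bit ps x | x <- enum 'I_N].

(* The terminal string a sentential form must derive, read symbol by symbol;
   it is invariant under derivation steps. *)
Definition yield ps (s : seq (option 'I_N + bool)) : seq bool :=
  flatten [seq match a with
               | inl None => word ps
               | inl (Some x) => [:: bit ps x]
               | inr b => [:: b] end | a <- s].

Lemma yield_step ps s t : step ps s t -> yield ps s = yield ps t.
Proof.
case=> i u v; rewrite /yield !map_cat !flatten_cat /=; congr (_ ++ (_ ++ _)).
rewrite /GammaN_prods; case: (@unliftP N.+1 ord0 i) => [x|] Hi; subst i => //=.
by rewrite -map_comp flatten_map1.
Qed.

Lemma yield_derives ps s t : derives ps s t -> yield ps s = yield ps t.
Proof. by elim=> // s1 t1 r1 /yield_step -> _. Qed.

Lemma yield_terminals ps w : yield ps (map inr w) = w.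
Proof. by rewrite /yield; elim: w => //= b w ->. Qed.

Lemma derives_bits ps (s : seq 'I_N) :
  derives ps [seq inl (Some x) | x <- s] (map inr (map (bit ps) s)).
Proof.
elim: s => [|x s IH] /=; first exact: derives_refl.
have := step_rule ps (lift ord0 x) [::] [seq inl (Some y) | y <- s].
rewrite /= /GammaN_prods liftK => Hx.
apply: derives_step Hx _.
exact: (@derives_catl (GammaN N) ps [:: inr (bit ps x)] _ _ IH).
Qed.

Lemma lang_GammaN ps w : lang ps w <-> w = word ps.
Proof.
split=> [|->].
  by move/yield_derives; rewrite (yield_terminals ps w) /yield /= cats0 => <-.
have := step_rule ps ord0 [::] [::].
rewrite /= /GammaN_prods unlift_none /= cats0 => Hstart.
by apply: derives_step Hstart _; exact: derives_bits.
Qed.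

Lemma size_word ps : size (word ps) == N.
Proof. by rewrite size_map size_enum_ord. Qed.
Definition wordt ps : N.-tuple bool := Tuple (size_word ps).

Definition param_of (t : N.-tuple bool) : param (GammaN N) :=
  fun i => if unlift ord0 i is Some x then
             if tnth t x then (ord_max : 'I_2) else ord0
           else ord0.

Lemma wordt_param_of t : wordt (param_of t) = t.
Proof.
apply: val_inj; rewrite /= /word -[RHS]map_tnth_enum; apply: eq_map => x.
by rewrite /bit /param_of liftK; case: (tnth t x).
Qed.

Lemma same_lang_wordt p q : same_lang p q -> wordt p = wordt q.
Proof. by move=> Hpq; apply: val_inj; apply/lang_GammaN/Hpq/lang_GammaN. Qed.

End GammaNLanguage.

Section Adversary.
Variable N : nat.
Implicit Types (A B : glearner (GammaN N)) (S : {set N.-tuple bool}).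

Definition correct_on S A :=
  forall ps n p, wordt ps \in S -> run ps A n p -> wordt p = wordt ps.

Definition hard A :=
  forall S, S != set0 -> correct_on S A ->
    exists ps n p, [/\ wordt ps \in S, run ps A n p & #|S| - 1 <= n].

Lemma hard_output p : hard (LOut _ p).
Proof.
move=> S /set0Pn [t0 Ht0] Hcorrect.
have HS : S \subset [set wordt p].
  apply/subsetP => t Ht; rewrite inE; apply/eqP.
  have := Hcorrect (param_of t) 0 p; rewrite wordt_param_of => ->//.
  exact: run_out.
exists (param_of t0), 0, p; split; rewrite ?wordt_param_of //; first constructor.
by move/subset_leq_card: HS; rewrite cards1; lia.
Qed.

(* One query whose answer excludes at most the candidate t costs one step. *)
Lemma hard_query A B (t : N.-tuple bool) :
  (forall ps n p, wordt ps != t -> run ps B n p -> run ps A n.+1 p) ->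
  hard B -> hard A.
Proof.
move=> Hstep HB S /set0Pn [t0 Ht0] Hcorrect.
have HS : #|S| <= #|S :\ t| + 1 by rewrite (cardsD1 t S) addnC leq_add2l leq_b1.
have [Sempty | [t1 Ht1]] := set_0Vmem (S :\ t).
  have [n [p Hr]] := run_exists (param_of t0) A.
  exists (param_of t0), n, p; rewrite wordt_param_of; split=> //.
  by rewrite Sempty cards0 in HS; lia.
have inS ps : wordt ps \in S :\ t -> wordt ps != t /\ wordt ps \in S.
  by rewrite !inE => /andP.
have [||ps [n [p [Hps Hr Hn]]]] := HB (S :\ t).
- by apply/set0Pn; exists t1.
- move=> ps n p /inS [Hne Hin] Hr; exact: Hcorrect Hin (Hstep _ _ _ Hne Hr).
have [Hne Hin] := inS _ Hps.
exists ps, n.+1, p; split=> //; first exact: Hstep.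
have : 0 < #|S :\ t| by apply/card_gt0P; exists t1.
lia.
Qed.

(* Adversary: membership queries are answered "no", equivalence queries with
   the hypothesis' own word as counterexample. *)
Lemma hard_learner A : hard A.
Proof.
elim: A => [p|w k IH|h k IH]; first exact: hard_output.
- set t := insubd [tuple false | _ < N] w.
  apply: (@hard_query _ (k false) t); last exact: IH.
  move=> ps n p Hne Hr.
  apply: run_mem Hr; split=> // /lang_GammaN Hw; case/negP: Hne.
  apply/eqP; apply: val_inj.
  by rewrite /t insubdK Hw //; exact: size_word.
- apply: (@hard_query _ (k (Some (word h))) (wordt h)); last exact: IH.
  move=> ps n p Hne Hr.
  apply: run_eq_no Hr; split=> [_ /lang_GammaN Hw|_]; last exact/lang_GammaN.
  by case/negP: Hne; apply/eqP; apply: val_inj.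
Qed.

Lemma learner_lower_bound A : learns A ->
  exists ps n p, run ps A n p /\ 2 ^ N - 1 <= n.
Proof.
move=> HA; have [||ps [n [p [_ Hr Hn]]]] := @hard_learner A [set: N.-tuple bool].
- by apply/set0Pn; exists [tuple false | _ < N]; rewrite inE.
- by move=> ps n p _ Hr; apply: same_lang_wordt; exact: HA Hr.
by exists ps, n, p; rewrite cardsT card_tuple card_bool in Hn.
Qed.

End Adversary.

Lemma exp_beats_linear a b : exists j, 2 <= j /\ a * j + b <= 2 ^ j.
Proof.
set m := a + b + 3; exists (4 * m); split; first lia.
have Hm : m < 2 ^ m := ltn_expl m (isT : 1 < 2).
rewrite (mulnC 4) expnM; move: Hm; set x := 2 ^ m => Hm.
have Hx4 : m ^ 4 <= x ^ 4 by rewrite leq_exp2r //; exact: ltnW.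
have Hm4 : m ^ 4 = (m * m) * (m * m) by rewrite !expnS expn0 muln1 !mulnA.
have Ha : a * (m * 4) <= m * (m * 4) by rewrite leq_mul2r; apply/orP; right; lia.
have Hmm : 5 * (m * m) <= (m * m) * (m * m) by rewrite leq_mul2r /m; apply/orP; right; nia.
have Hm2 : m <= m * m by apply: leq_pmulr; rewrite /m addn3.
have Hb : b <= m by rewrite /m; lia.
rewrite Hm4 in Hx4; clearbody m x; nia.
Qed.

(* 2^N - 1 exceeds the polynomial bound c * (N + 3)^d + c for some N:
   take N + 3 = 2^j, so the bound becomes c * 2^(j d) + c. *)
Lemma exp_beats_poly c d : exists N, c * (N.+1 + 2) ^ d + c < 2 ^ N - 1.
Proof.
have [j [Hj2 Hj]] := exp_beats_linear d (2 * c + 5).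
exists (2 ^ j - 3).
have -> : (2 ^ j - 3).+1 + 2 = 2 ^ j by have := leq_pexp2l (isT : 0 < 2) Hj2; lia.
rewrite -expnM.
have Hsplit : 2 ^ (j * d) * 2 ^ (2 * c + 2) <= 2 ^ (2 ^ j - 3).
  by rewrite -expnD leq_pexp2l //; lia.
have Hlin : 2 * c + 2 < 2 ^ (2 * c + 2) := ltn_expl _ (isT : 1 < 2).
have Hpos : 0 < 2 ^ (j * d) by rewrite expn_gt0.
move: Hsplit Hlin Hpos; set y := 2 ^ (j * d); set z := 2 ^ (2 * c + 2).
move=> Hsplit Hlin Hpos.
have : y * (2 * c + 2).+1 <= y * z by rewrite leq_mul2l Hlin orbT.
nia.
Qed.

Theorem mainTheorem1 :
  (forall N : nat, 1 <= N ->
     forall A : glearner (GammaN N), learns A ->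
       exists (ps : param (GammaN N)) (n : nat) (p : param (GammaN N)),
         run ps A n p /\ 2 ^ N - 1 <= n)
  /\
  ~ (exists (A : forall G : ppcfg, glearner G) (c d : nat),
       (forall G : ppcfg, learns (A G)) /\
       (forall (G : ppcfg) (ps : param G) (n : nat) (p : param G),
          run ps (A G) n p -> n <= c * (ngroups G + arity G) ^ d + c)).
Proof.
split=> [N _ A|[A [c [d [Hlearns Hbound]]]]]; first exact: learner_lower_bound.
have [N HN] := exp_beats_poly c d.
have [ps [n [p [Hr Hn]]]] := learner_lower_bound (Hlearns (GammaN N)).
by have := Hbound _ _ _ _ Hr; rewrite /=; lia.
Qed.
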